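(* For every $n\in\mathbb{N}$, the number of maximal sum-free sets in the elementary abelian group $\mathbb{Z}_3^n$ (of order $3^n$) is $3^n-1$.
   Context: A non-empty subset $S$ of a group $G$ is called sum-free if for all $s_1,s_2\in S$ (including the case $s_1=s_2$) one has $s_1s_2\notin S$. A maximal sum-free set in a finite group $G$ means a sum-free set of largest possible cardinality among all sum-free sets in $G$ (maximal by cardinality). *)

From mathcomp Require Import all_boot all_order all_algebra.
Set Implicit Arguments. Unset Strict Implicit. Unset Printing Implicit Defensive.
Import GRing.Theory.
Local Open Scope ring_scope.

Definition sum_free (G : finZmodType) (S : {set G}) : bool :=
  (S != set0) && [forall s1 in S, forall s2 in S, (s1 + s2) \notin S].

(* maximal sum-free = sum-free of largest possible cardinality *)
Definition max_sum_free (G : finZmodType) (S : {set G}) : bool :=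
  sum_free S && [forall T : {set G}, sum_free T ==> (#|T| <= #|S|)%N].

From mathcomp Require Import all_boot all_order all_algebra.
Set Implicit Arguments.
Unset Strict Implicit.
Unset Printing Implicit Defensive.

Import GRing.Theory.
Local Open Scope ring_scope.

(* In a group of exponent 3, a sum-free set S containing a is disjoint from its
   translates S + a and S - a, so 3 |S| <= |G|.  When equality holds these three
   translates cover G; this forces S to be closed under (a, b, d) |-> a + b - d,
   i.e. S is a coset c + H of a subgroup H of index 3 with c \notin H, and
   labelling the cosets c + H, H, -c + H by 1, 0, -1 gives a homomorphism
   f : G -> Z_3 with S = f^-1(1).  In Z_3^n the homomorphisms are the maps
   x |-> x . v, so the maximal sum-free sets are exactly the 3^n - 1 affine
   hyperplanes { x | x . v = 1 } with v <> 0. *)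

Lemma Z3_cases (z : 'Z_3) : [\/ z = 0, z = 1 | z = -1].
Proof.
by case: z => [[|[|[|m]]] lt_z3];
  [constructor 1 | constructor 2 | constructor 3 | ]; try apply/val_inj.
Qed.

Lemma sum_freeP (G : finZmodType) (S : {set G}) :
  reflect (S != set0 /\ {in S &, forall x y, x + y \notin S}) (sum_free S).
Proof.
apply: (iffP andP) => [[-> /forallP sfS] | [-> sfS]]; split=> //.
  by move=> x y xS yS; have /forall_inP/(_ y yS) := implyP (sfS x) xS.
by apply/forall_inP => x xS; apply/forall_inP => y yS; apply: sfS.
Qed.

Section ExponentThree.

Variable G : finZmodType.
Hypothesis mulrn3 : forall x : G, x *+ 3 = 0.

Lemma addrr_opp (x : G) : x + x = - x.
Proof. by apply/eqP; rewrite -subr_eq0 opprK -mulr2n -mulrSr mulrn3. Qed.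

Lemma mulrnZ3D (x : G) (k l : 'Z_3) : x *+ (k + l)%R = x *+ k + x *+ l.
Proof.
by rewrite -mulrnDr [in RHS](divn_eq (k + l) 3) mulrnDr mulrnA mulrn3 add0r.
Qed.

Section SumFree.

Variable S : {set G}.
Hypothesis sfS : {in S &, forall x y, x + y \notin S}.

Lemma card_sum_free_translates a : a \in S ->
  #|S :|: [set x | x - a \in S] :|: [set x | x + a \in S]| = (3 * #|S|)%N.
Proof.
move=> aS.
have card_shift b : #|[set x | x + b \in S]| = #|S| by apply/card_preimset/addIr.
have disj_S_Sa : [disjoint S & [set x | x - a \in S]].
  apply/pred0P => x; rewrite /= !inE; apply/negbTE/andP => -[xS xaS].
  by have := sfS xaS aS; rewrite subrK xS.
have disj_SSa_Sa' : [disjoint S :|: [set x | x - a \in S] & [set x | x + a \in S]].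
  apply/pred0P => x; rewrite /= !inE; apply/negbTE/andP => -[/orP[xS|xaS] xaS'].
    by have := sfS xS aS; rewrite xaS'.
  by have := sfS xaS' aS; rewrite -addrA addrr_opp xaS.
rewrite !cardsU !disjoint_setI0 // !cards0 !subn0 !card_shift.
by rewrite !mulSn mul0n addn0 addnA.
Qed.

End SumFree.

Lemma sum_free_card_le (S : {set G}) : sum_free S -> (3 * #|S| <= #|G|)%N.
Proof.
case/sum_freeP => /set0Pn[a aS] sfS.
by rewrite -(card_sum_free_translates sfS aS) max_card.
Qed.

Section Extremal.

Variable S : {set G}.
Hypothesis sfS : {in S &, forall x y, x + y \notin S}.
Hypothesis cardS : (3 * #|S|)%N = #|G|.

Lemma extremal_cover a x : a \in S -> [|| x \in S, x - a \in S | x + a \in S].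
Proof.
move=> aS.
suff /setP/(_ x) : S :|: [set x | x - a \in S] :|: [set x | x + a \in S] = setT.
  by rewrite !inE orbA.
by apply/eqP; rewrite eqEcard subsetT cardsT card_sum_free_translates // cardS leqnn.
Qed.

Lemma extremal_oppD a b : a \in S -> b \in S -> - (a + b) \in S.
Proof.
move=> aS bS; case/or3P: (extremal_cover (- (a + b)) aS) => // [abaS | abaS].
  have := sfS abaS bS.
  by rewrite opprD addrAC subrK -opprD addrr_opp opprK aS.
have := sfS bS bS.
by rewrite addrr_opp; move: abaS; rewrite opprD addrAC addNr add0r => ->.
Qed.

Lemma extremal_addrB a b d : a \in S -> b \in S -> d \in S -> a + b - d \in S.
Proof.
move=> aS bS dS; have := extremal_oppD (extremal_oppD aS bS) dS.
by rewrite opprD opprK.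
Qed.

Variables (c : G) (cS : c \in S).

Lemma extremal_shiftD x y : x + c \in S -> y + c \in S -> x + y + c \in S.
Proof.
move=> xS yS; have := extremal_addrB xS yS cS.
by rewrite addrACA -[x + y + _ - c]addrA addrK.
Qed.

Let in_level x (k : 'Z_3) := x - c *+ k + c \in S.

Lemma in_level_exists x : exists k, in_level x k.
Proof.
rewrite /in_level; case/or3P: (extremal_cover x cS) => xS.
- by exists 1; rewrite mulr1n subrK.
- exists (-1); have -> : c *+ (-1 : 'Z_3)%R = - c by rewrite -addrr_opp.
  by rewrite opprK -addrA addrr_opp.
- by exists 0; rewrite mulr0n subr0.
Qed.

Lemma in_level_unique x k l : in_level x k -> in_level x l -> k = l.
Proof.
rewrite /in_level; set u := x - c *+ k + c; set w := x - c *+ l + c => uS wS.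
have w_def : w = u + c *+ (k - l)%R.
  rewrite /w /u (_ : c *+ k = c *+ (k - l)%R + c *+ l); last first.
    by rewrite -mulrnZ3D subrK.
  by rewrite opprD addrA [RHS]addrAC [X in _ = X + c]addrAC subrK.
case: (Z3_cases (k - l)) => klE.
- by apply/eqP; rewrite -subr_eq0 klE.
- by move: wS; rewrite w_def klE mulr1n (negPf (sfS uS cS)).
- by have := sfS wS cS; rewrite w_def klE -addrA -mulrSr mulrn3 addr0 uS.
Qed.

Lemma in_levelD x y k l : in_level x k -> in_level y l -> in_level (x + y) (k + l).
Proof.
rewrite /in_level => xS yS.
by rewrite mulrnZ3D opprD addrA (addrAC x) -[x - _ + y - _]addrA extremal_shiftD.
Qed.

Lemma extremal_sum_free_preim1 :
  exists f : G -> 'Z_3, {morph f : x y / x + y} /\ S = f @^-1: [set 1].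
Proof.
pose f x := xchoose (in_level_exists x).
have f_level x : in_level x (f x) := xchooseP (in_level_exists x).
have level1 x : in_level x 1 = (x \in S) by rewrite /in_level mulr1n subrK.
exists f; split=> [x y | ].
  exact: in_level_unique (f_level _) (in_levelD (f_level x) (f_level y)).
apply/setP => x; rewrite !inE; apply/idP/eqP => [xS | fx1].
  by apply: in_level_unique (f_level x) _; rewrite level1.
by rewrite -level1 -fx1.
Qed.

End Extremal.

Lemma max_sum_freeE_of_extremal (T S : {set G}) :
  sum_free T -> (3 * #|T|)%N = #|G| ->
  max_sum_free S = sum_free S && (3 * #|S| == #|G|)%N.
Proof.
move=> sfT cardT; rewrite /max_sum_free; apply/andP/andP => -[sfS maxS]; split=> //.
  rewrite eqn_leq sum_free_card_le //= -cardT leq_mul2l /=.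
  by have /implyP := forallP maxS T; apply.
apply/forall_inP => U sfU.
by rewrite -(leq_pmul2l (isT : (0 < 3)%N)) (eqP maxS) sum_free_card_le.
Qed.

Section AdditiveToZ3.

Variable f : G -> 'Z_3.
Hypothesis fD : {morph f : x y / x + y}.

Lemma morph_add0 : f 0 = 0.
Proof. by apply: (addrI (f 0)); rewrite -fD !addr0. Qed.

Lemma morph_addN x : f (- x) = - f x.
Proof. by apply: (addrI (f x)); rewrite -fD !subrr morph_add0. Qed.

Lemma morph_addMn x m : f (x *+ m) = f x *+ m.
Proof. by elim: m => [|m IHm]; rewrite ?morph_add0 // !mulrS fD IHm. Qed.

Lemma morph_Z3E x :
  f x = if x \in f @^-1: [set 1] then 1
        else if - x \in f @^-1: [set 1] then -1 else 0.
Proof. by rewrite !inE morph_addN; case: (Z3_cases (f x)) => ->. Qed.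

Lemma sum_free_preim1 u : f u = 1 ->
  sum_free (f @^-1: [set 1]) /\ (3 * #|f @^-1: [set 1%R]|)%N = #|G|.
Proof.
move=> fu1; have uS : u \in f @^-1: [set 1] by rewrite !inE fu1.
have sfS : {in f @^-1: [set 1] &, forall x y, x + y \notin f @^-1: [set 1]}.
  by move=> x y; rewrite !inE fD => /eqP-> /eqP->.
split; first by apply/sum_freeP; split=> //; apply/set0Pn; exists u.
rewrite -(card_sum_free_translates sfS uS) -cardsT; apply: eq_card => x.
rewrite !inE !fD morph_addN fu1.
by case: (Z3_cases (f x)) => ->.
Qed.

End AdditiveToZ3.

Lemma preim1_inj (f g : G -> 'Z_3) :
  {morph f : x y / x + y} -> {morph g : x y / x + y} ->
  f @^-1: [set 1] = g @^-1: [set 1] -> f =1 g.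
Proof. by move=> fD gD fg x; rewrite (morph_Z3E fD) (morph_Z3E gD) fg. Qed.

End ExponentThree.

Section RowVectorsZ3.

Variable n : nat.
Local Notation V := 'rV['Z_3]_n.

Lemma rV_Z3_mulrn3 (x : V) : x *+ 3 = 0.
Proof. by rewrite -scaler_nat (_ : 3%:R = 0) ?scale0r //; apply/val_inj. Qed.

Definition dot (x v : V) : 'Z_3 := \sum_i x 0 i * v 0 i.

Lemma dotDl v : {morph dot^~ v : x y / x + y}.
Proof.
by move=> x y; rewrite /dot -big_split; apply: eq_bigr => i _; rewrite mxE mulrDl.
Qed.

Lemma dotZl k x v : dot (k *: x) v = k * dot x v.
Proof. by rewrite /dot mulr_sumr; apply: eq_bigr => i _; rewrite mxE mulrA. Qed.

Lemma dotr0 x : dot x 0 = 0.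
Proof. by rewrite /dot big1 // => i _; rewrite mxE mulr0. Qed.

Lemma dot_delta i v : dot 'e_i v = v 0 i.
Proof.
rewrite /dot (bigD1 i) //= big1 => [|j /negbTE ji].
  by rewrite mxE !eqxx mul1r addr0.
by rewrite mxE ji andbF mul0r.
Qed.

Lemma additive_dotE (f : V -> 'Z_3) :
  {morph f : x y / x + y} -> f =1 dot^~ (\row_i f 'e_i).
Proof.
move=> fD x; rewrite {1}(row_sum_delta x) (big_morph f fD (morph_add0 fD)) /dot.
apply: eq_bigr => i _; rewrite mxE -(natr_Zp (x 0 i)) scaler_nat.
by rewrite morph_addMn // mulr_natl.
Qed.

Definition hyperplane (v : V) : {set V} := (dot^~ v) @^-1: [set 1].

Lemma hyperplane_inj : injective hyperplane.
Proof.
move=> v w vw; apply/rowP => i; rewrite -!dot_delta.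
exact: preim1_inj (@dotDl v) (@dotDl w) vw _.
Qed.

Lemma hyperplane_extremal v : v != 0 ->
  sum_free (hyperplane v) /\ (3 * #|hyperplane v|)%N = #|V|.
Proof.
move=> v0; have [i vi0] : exists i, v 0 i != 0.
  apply/existsP; apply: contraNT v0 => /existsPn v0.
  by apply/eqP/rowP => i; rewrite mxE; apply/eqP/negbNE/v0.
apply: (sum_free_preim1 rV_Z3_mulrn3 (@dotDl v) (u := v 0 i *: 'e_i)).
rewrite dotZl dot_delta.
by case: (Z3_cases (v 0 i)) vi0 => ->; rewrite ?eqxx ?mulrNN ?mulr1.
Qed.

Lemma max_sum_free_hyperplanes :
  [set S : {set V} | max_sum_free S] = hyperplane @: [set~ 0].
Proof.
apply/setP => S; rewrite inE; apply/idP/imsetP => [maxS | [v]].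
  have /sum_freeP[/set0Pn[a aS] sfS] := (andP maxS).1.
  have a0 : a != 0.
    by apply: contraNneq (sfS a a aS aS) => a0; rewrite a0 addr0 -a0.
  have [sfH cardH] := hyperplane_extremal a0.
  move: maxS; rewrite (max_sum_freeE_of_extremal rV_Z3_mulrn3 S sfH cardH).
  case/andP=> _ /eqP cardS.
  have [f [fD Sf]] := extremal_sum_free_preim1 rV_Z3_mulrn3 sfS cardS aS.
  have fE := additive_dotE fD.
  exists (\row_i f 'e_i).
    by rewrite !inE; apply: contraTneq aS => v0; rewrite Sf !inE fE v0 dotr0.
  by rewrite Sf; apply/setP => x; rewrite !inE fE.
rewrite !inE => v0 ->; have [sfH cardH] := hyperplane_extremal v0.
by rewrite (max_sum_freeE_of_extremal rV_Z3_mulrn3 _ sfH cardH) sfH cardH eqxx.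
Qed.

End RowVectorsZ3.

Theorem mainTheorem2 (n : nat) :
  #|[set S : {set 'rV['Z_3]_n} | max_sum_free S]| = (3 ^ n - 1)%N.
Proof.
rewrite max_sum_free_hyperplanes (card_imset _ (@hyperplane_inj n)) cardsC1.
by rewrite card_mx card_ord mul1n subn1.
Qed.
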